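(* Let $G$ be a group and $\kappa$ an infinite cardinal with $\kappa<|G|$. Then the ballean $(G,\mathcal E_{[G]^{<\kappa}})$ is not normal.
   Context: A ballean is a pair $(X,\mathcal E_X)$ where $X$ is a set and $\mathcal E_X$ is a family of subsets of $X\times X$ (entourages) such that: each $E\in\mathcal E_X$ contains the diagonal; for any $E,F\in\mathcal E_X$ there is $D\in\mathcal E_X$ with $E\circ F^{-1}\subset D$; and $\bigcup\mathcal E_X=X\times X$. For $E\in\mathcal E_X$, $x\in X$, $A\subset X$: $E[x]=\{y:(x,y)\in E\}$, $E[A]=\bigcup_{a\in A}E[a]$. $B\subset X$ is bounded if $B\subset E[x]$ for some $E\in\mathcal E_X$, $x\in X$; $\mathcal B_X$ is the family of bounded sets. Sets $A,B$ are asymptotically disjoint if $E[A]\cap E[B]\in\mathcal B_X$ for all $E\in\mathcal E_X$; $U$ is an asymptotic neighborhood of $A$ if $E[A]\setminus U\in\mathcal B_X$ for all $E$; $X$ is normal if any two asymptotically disjoint sets have disjoint asymptotic neighborhoods. For a group $G$ and infinite cardinal $\kappa\le|G|$, $[G]^{<\kappa}$ is the family of subsets of $G$ of cardinality $<\kappa$, and $\mathcal E_{[G]^{<\kappa}}$ is the ball structure on $G$ consisting of the entourages $E_I=\{(x,y)\in G\times G:y\in\{x\}\cup Ix\}$, $I\in[G]^{<\kappa}$. *)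

From Stdlib Require Import Classical.

Set Implicit Arguments.

Record Group := {
  carrier :> Type;
  gmul : carrier -> carrier -> carrier;
  gone : carrier;
  ginv : carrier -> carrier;
  gmulA : forall x y z, gmul x (gmul y z) = gmul (gmul x y) z;
  gmul1g : forall x, gmul gone x = x;
  gmulg1 : forall x, gmul x gone = x;
  gmulVg : forall x, gmul (ginv x) x = gone;
  gmulgV : forall x, gmul x (ginv x) = gone
}.

Definition card_le (A B : Type) : Prop :=
  exists f : A -> B, forall x y, f x = f y -> x = y.
Definition card_lt (A B : Type) : Prop := card_le A B /\ ~ card_le B A.
Definition infinite_card (K : Type) : Prop := card_le nat K.

(* Subsets of X are predicates X -> Prop; entourages are relations. *)
Definition ball {X : Type} (E : X -> X -> Prop) (x : X) : X -> Prop :=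
  fun y => E x y.
Definition ballS {X : Type} (E : X -> X -> Prop) (A : X -> Prop) : X -> Prop :=
  fun y => exists a, A a /\ E a y.

(* A ball structure: a family Ent of entourages on X. *)
Definition bounded {X : Type} (Ent : (X -> X -> Prop) -> Prop) (B : X -> Prop) :=
  exists E, Ent E /\ exists x, forall y, B y -> ball E x y.

Definition asymp_disjoint {X : Type} (Ent : (X -> X -> Prop) -> Prop)
  (A B : X -> Prop) : Prop :=
  forall E, Ent E -> bounded Ent (fun y => ballS E A y /\ ballS E B y).

Definition asymp_nbhd {X : Type} (Ent : (X -> X -> Prop) -> Prop)
  (U A : X -> Prop) : Prop :=
  forall E, Ent E -> bounded Ent (fun y => ballS E A y /\ ~ U y).

Definition normal_ballean {X : Type} (Ent : (X -> X -> Prop) -> Prop) : Prop :=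
  forall A B : X -> Prop, asymp_disjoint Ent A B ->
    exists U V : X -> Prop,
      asymp_nbhd Ent U A /\ asymp_nbhd Ent V B /\ (forall x, ~ (U x /\ V x)).

(* [G]^{<kappa}: subsets of G of cardinality < kappa (kappa represented by K). *)
Definition small_subset (G : Group) (K : Type) (I : G -> Prop) : Prop :=
  card_lt {x : G | I x} K.

Definition ent_I (G : Group) (I : G -> Prop) : G -> G -> Prop :=
  fun x y => y = x \/ exists i, I i /\ y = gmul G i x.

Definition ent_lt_kappa (G : Group) (K : Type) : (G -> G -> Prop) -> Prop :=
  fun E => exists I, small_subset G K I /\ E = ent_I G I.

(* Let [H] be a subgroup of [G] of cardinality [kappa] (generated by a copy of
   [kappa] in [G]).  In every double coset [H g H] having no more right than
   left cosets, pick one point in each right coset so that distinct right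
   cosets get points in distinct left cosets; the union [B] of these choices
   meets every left coset at most once, which makes [H] and [B] asymptotically
   disjoint.  If [U] and [V] were disjoint asymptotic neighbourhoods of [H] and
   [B], every left coset [z H] of such a double coset would contain a point of
   [U], lying in [h B \ V] for some [h] in [H]; since each [h B \ V] has fewer
   than [kappa] points, there are at most [kappa] such left cosets.  Inversion
   exchanges left and right cosets, so the other double cosets contribute at
   most [kappa] left cosets too, and [|G| <= kappa * |H| = kappa]. *)

From Stdlib Require Import Classical ClassicalEpsilon FunctionalExtensionality
  PropExtensionality RelationClasses Lia List Cantor FinFun.
From mathcomp Require boolp classical_sets.

Set Implicit Arguments.

(** * Cardinal arithmetic *)

Lemma sig_eq (A : Type) (P : A -> Prop) (u v : sig P) :
  proj1_sig u = proj1_sig v -> u = v.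
Proof. apply eq_sig_hprop; intros; apply proof_irrelevance. Qed.

Lemma zorn {T : Type} (t0 : T) (R : T -> T -> Prop) :
  (forall t, R t t) -> (forall r s t, R r s -> R s t -> R r t) ->
  (forall C : T -> Prop, (forall s t, C s -> C t -> R s t \/ R t s) ->
     exists t, forall s, C s -> R s t) ->
  exists t, forall s, R t s -> R s t.
Proof.
  intros Rrefl Rtrans Rchain.
  destruct (@classical_sets.ZL_preorder T t0 (fun a b => boolp.asbool (R a b)))
    as [t tmax].
  - intro t; apply boolp.asboolT, Rrefl.
  - intros r s u rs su; apply boolp.asboolT.
    exact (Rtrans r s u (boolp.asboolW rs) (boolp.asboolW su)).
  - intros C Ctot. destruct (Rchain C) as [t Ct].
    + intros s u Cs Cu.
      destruct (Ctot s u Cs Cu); [left|right]; apply boolp.asboolW; assumption.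
    + exists t; intros s Cs; apply boolp.asboolT, Ct, Cs.
  - exists t; intros s ts; apply boolp.asboolW, tmax, boolp.asboolT, ts.
Qed.

Definition injective_on {A B : Type} (P : A -> Prop) (f : A -> B) :=
  forall x y, P x -> P y -> f x = f y -> x = y.

Definition injects {A B : Type} (P : A -> Prop) (Q : B -> Prop) (f : A -> B) :=
  (forall x, P x -> Q (f x)) /\ injective_on P f.

Lemma card_le_refl (X : Type) : card_le X X.
Proof. exists (fun x => x); auto. Qed.

Lemma card_le_trans (X Y Z : Type) : card_le X Y -> card_le Y Z -> card_le X Z.
Proof. intros [f hf] [g hg]; exists (fun x => g (f x)); auto. Qed.

Lemma card_le_of_injective_on {A B : Type} (P : A -> Prop) (f : A -> B) :
  injective_on P f -> card_le {x | P x} B.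
Proof.
  intro finj; exists (fun x => f (proj1_sig x)).
  intros [x px] [y py] e; apply sig_eq, finj; assumption.
Qed.

Lemma injective_on_of_card_le {A B : Type} (b0 : B) (P : A -> Prop) :
  card_le {x | P x} B -> exists f : A -> B, injective_on P f.
Proof.
  intros [f finj].
  exists (fun x => match excluded_middle_informative (P x) with
                   | left px => f (exist _ x px) | right _ => b0 end).
  intros x y px py.
  destruct (excluded_middle_informative (P x)); [|contradiction].
  destruct (excluded_middle_informative (P y)); [|contradiction].
  intro e; apply finj in e; injection e; auto.
Qed.

Lemma injects_of_card_le {A B : Type} (b0 : B) (P : A -> Prop) (Q : B -> Prop) :
  card_le {x | P x} {y | Q y} -> exists f : A -> B, injects P Q f.
Proof.
  intros [f finj].
  exists (fun x => match excluded_middle_informative (P x) with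
                   | left px => proj1_sig (f (exist _ x px)) | right _ => b0 end).
  split.
  - intros x px; destruct (excluded_middle_informative (P x)); [|contradiction].
    apply proj2_sig.
  - intros x y px py.
    destruct (excluded_middle_informative (P x)); [|contradiction].
    destruct (excluded_middle_informative (P y)); [|contradiction].
    intro e; apply sig_eq, finj in e; injection e; auto.
Qed.

Definition partial_injection {X Y : Type} (R : X -> Y -> Prop) :=
  (forall x y y', R x y -> R x y' -> y = y') /\
  (forall x x' y, R x y -> R x' y -> x = x').

Lemma partial_injection_flip {X Y : Type} (R : X -> Y -> Prop) :
  partial_injection R -> partial_injection (fun y x => R x y).
Proof. intros [Rfun Rinj]; split; eauto. Qed.

Lemma card_le_of_partial_injection {X Y : Type} (R : X -> Y -> Prop) :
  partial_injection R -> (forall x, exists y, R x y) -> card_le X Y.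
Proof.
  intros [_ Rinj] Rtot.
  exists (fun x => proj1_sig (constructive_indefinite_description _ (Rtot x))).
  intros a b e.
  destruct (constructive_indefinite_description _ (Rtot a)) as [ya ha].
  destruct (constructive_indefinite_description _ (Rtot b)) as [yb hb].
  simpl in e; subst; eapply Rinj; eauto.
Qed.

Lemma partial_injection_chain_union {X Y : Type} (C : (X -> Y -> Prop) -> Prop) :
  (forall R, C R -> partial_injection R) ->
  (forall R S, C R -> C S -> (forall x y, R x y -> S x y) \/ (forall x y, S x y -> R x y)) ->
  partial_injection (fun x y => exists R, C R /\ R x y).
Proof.
  intros Cpinj Cchain; split.
  - intros x y y' [R [CR hR]] [S [CS hS]].
    destruct (Cchain R S CR CS) as [h|h].
    + exact (proj1 (Cpinj S CS) x y y' (h _ _ hR) hS).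
    + exact (proj1 (Cpinj R CR) x y y' hR (h _ _ hS)).
  - intros x x' y [R [CR hR]] [S [CS hS]].
    destruct (Cchain R S CR CS) as [h|h].
    + exact (proj2 (Cpinj S CS) x x' y (h _ _ hR) hS).
    + exact (proj2 (Cpinj R CR) x x' y hR (h _ _ hS)).
Qed.

(* A maximal partial injection is total on one of the two sides, otherwise
   it could be extended by a new pair [(x0, y0)]. *)
Lemma card_le_total (X Y : Type) : card_le X Y \/ card_le Y X.
Proof.
  set (T := {R : X -> Y -> Prop | partial_injection R}).
  set (sub := fun a b : T => forall x y, proj1_sig a x y -> proj1_sig b x y).
  assert (t0 : T) by (exists (fun _ _ => False); split; contradiction).
  destruct (zorn t0 sub) as [[R Rpinj] Rmax].
  - intros t x y; auto.
  - intros r s u h1 h2 x y h; auto.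
  - intros C Cchain.
    set (D := fun R => exists t : T, C t /\ R = proj1_sig t).
    assert (hU : partial_injection (fun x y => exists R, D R /\ R x y)).
    { apply partial_injection_chain_union.
      - intros R' [t [_ ->]]; apply proj2_sig.
      - intros R1 R2 [t1 [C1 ->]] [t2 [C2 ->]]; apply Cchain; assumption. }
    exists (exist _ _ hU); intros t Ct x y h.
    exists (proj1_sig t); split; [exists t; auto | exact h].
  - simpl in Rmax.
    destruct (classic (forall x, exists y, R x y)) as [Rtot|Rntot];
      [left; exact (card_le_of_partial_injection Rpinj Rtot)|].
    destruct (classic (forall y, exists x, R x y)) as [Rsurj|Rnsurj];
      [right; exact (card_le_of_partial_injection (partial_injection_flip Rpinj) Rsurj)|].
    exfalso; destruct Rpinj as [Rfun Rinj].
    apply not_all_ex_not in Rntot as [x0 hx0].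
    apply not_all_ex_not in Rnsurj as [y0 hy0].
    assert (hR' : partial_injection (fun x y => R x y \/ (x = x0 /\ y = y0))).
    { split.
      - intros x y y' [h|[-> ->]] [h'|[e ->]]; subst; eauto;
          exfalso; apply hx0; eauto.
      - intros x x' y [h|[-> ->]] [h'|[-> e]]; subst; eauto;
          exfalso; apply hy0; eauto. }
    apply hx0; exists y0.
    apply (Rmax (exist _ _ hR')); [intros x y h; left; exact h | right; auto].
Qed.

Lemma injects_total {A : Type} (a0 : A) (P Q : A -> Prop) :
  (exists f, injects P Q f) \/ (exists f, injects Q P f).
Proof.
  destruct (card_le_total {x | P x} {x | Q x}) as [h|h];
    [left | right]; exact (injects_of_card_le a0 _ _ h).
Qed.

Definition finite_type (X : Type) :=
  exists (M : nat) (f : X -> nat), (forall x y, f x = f y -> x = y) /\ forall x, f x < M.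

Lemma nat_not_finite : ~ finite_type nat.
Proof.
  intros [M [f [finj fM]]].
  assert (hlen : length (map f (seq 0 (S M))) <= length (seq 0 M)).
  { apply NoDup_incl_length.
    - apply Injective_map_NoDup; [exact finj | apply seq_NoDup].
    - intros n hn; apply in_map_iff in hn as [m [<- _]].
      apply in_seq; specialize (fM m); lia. }
  rewrite length_map, !length_seq in hlen; lia.
Qed.

Lemma finite_not_infinite (X : Type) : finite_type X -> ~ infinite_card X.
Proof.
  intros [M [f [finj fM]]] [g ginj]; apply nat_not_finite.
  exists M, (fun n => f (g n)); auto.
Qed.

Lemma strict_incr_injective (u : nat -> nat) :
  (forall k, u k < u (S k)) -> forall m n, u m = u n -> m = n.
Proof.
  intros uincr.
  assert (lt : forall m n, m < n -> u m < u n).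
  { intros m n mn; induction mn as [|n _ IH]; [apply uincr|].
    specialize (uincr n); lia. }
  intros m n e; destruct (PeanoNat.Nat.lt_trichotomy m n) as [h|[h|h]]; auto;
    apply lt in h; lia.
Qed.

(* An unbounded [nat]-valued function yields a sequence along which it is
   strictly increasing. *)
Lemma infinite_of_unbounded (X : Type) (iota : X -> nat) :
  (forall M, exists x, M <= iota x) -> infinite_card X.
Proof.
  intro unbounded.
  set (above := fun M => proj1_sig (constructive_indefinite_description _ (unbounded M))).
  assert (habove : forall M, M <= iota (above M))
    by (intro M; exact (proj2_sig (constructive_indefinite_description _ (unbounded M)))).
  set (s := fix s k := match k with 0 => above 0 | S k => above (S (iota (s k))) end).
  exists s; intros m n e.
  apply (strict_incr_injective (fun k => iota (s k))); [|rewrite e; reflexivity].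
  intro k; apply habove.
Qed.

Lemma not_infinite_finite (X : Type) : ~ infinite_card X -> finite_type X.
Proof.
  intro ninf; destruct (card_le_total nat X) as [h|[iota iinj]]; [contradiction|].
  apply NNPP; intro nfin; apply ninf, (infinite_of_unbounded iota).
  intro M; apply NNPP; intro nM; apply nfin.
  exists M, iota; split; [exact iinj|].
  intro x; apply NNPP; intro hx; apply nM; exists x; lia.
Qed.

Lemma finite_prod (X Y : Type) : finite_type X -> finite_type Y -> finite_type (X * Y).
Proof.
  intros [M [f [finj fM]]] [N [g [ginj gN]]].
  exists (M * N), (fun p => f (fst p) * N + g (snd p)); split.
  - intros [x y] [x' y'] e; simpl in e.
    assert (hy := gN y); assert (hy' := gN y').
    assert (ex : f x = f x') by nia.
    rewrite ex in e; f_equal; [apply finj | apply ginj]; lia.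
  - intros [x y]; simpl; specialize (fM x); specialize (gN y); nia.
Qed.

Lemma finite_option (X : Type) : finite_type X -> finite_type (option X).
Proof.
  intros [M [f [finj fM]]].
  exists (S M), (fun o => match o with None => 0 | Some x => S (f x) end); split.
  - intros [x|] [y|] e; try discriminate; auto.
    injection e; intro; f_equal; auto.
  - intros [x|]; [specialize (fM x)|]; lia.
Qed.

(* Hessenberg's [K * K <= K], by Zorn's lemma on sets [P] containing a copy
   of [nat] together with an injective pairing [P * P -> P]. *)
Section Hessenberg.

Variables (K : Type) (e : nat -> K).
Hypothesis e_inj : forall m n, e m = e n -> m = n.

Record pairing := {
  pdom : K -> Prop;
  ppair : K -> K -> K;
  pdom_nat : forall n, pdom (e n);
  pdom_pair : forall x y, pdom x -> pdom y -> pdom (ppair x y);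
  ppair_inj : forall x y x' y', pdom x -> pdom y -> pdom x' -> pdom y' ->
    ppair x y = ppair x' y' -> x = x' /\ y = y'
}.

Definition pairing_le (p q : pairing) :=
  (forall x, pdom p x -> pdom q x) /\
  (forall x y, pdom p x -> pdom p y -> ppair q x y = ppair p x y).

Lemma pairing_le_refl p : pairing_le p p.
Proof. split; auto. Qed.

Lemma pairing_le_trans p q r : pairing_le p q -> pairing_le q r -> pairing_le p r.
Proof.
  intros [pq epq] [qr eqr]; split; auto.
  intros x y px py; rewrite eqr; auto.
Qed.

Definition nat_pairing : pairing.
Proof.
  set (index := fun x => epsilon (inhabits 0) (fun n => e n = x)).
  assert (index_e : forall n, index (e n) = n).
  { intro n; apply e_inj.
    exact (epsilon_spec (inhabits 0) (fun m => e m = e n) (ex_intro _ n eq_refl)). }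
  refine {| pdom := fun x => exists n, x = e n;
            ppair := fun x y => e (to_nat (index x, index y)) |}.
  - intro n; exists n; reflexivity.
  - intros x y _ _; eauto.
  - intros x y x' y' [a ->] [b ->] [c ->] [d ->] h.
    apply e_inj, to_nat_inj in h; rewrite !index_e in h.
    injection h; intros; subst; auto.
Defined.

Lemma pairing_chain_bound (C : pairing -> Prop) :
  (forall p q, C p -> C q -> pairing_le p q \/ pairing_le q p) ->
  exists u, forall p, C p -> pairing_le p u.
Proof.
  intro Cchain.
  destruct (classic (exists p, C p)) as [[p0 Cp0]|Cempty];
    [|exists nat_pairing; intros p Cp; exfalso; eauto].
  assert (join : forall p q, C p -> C q -> exists r, C r /\ pairing_le p r /\ pairing_le q r).
  { intros p q Cp Cq; destruct (Cchain p q Cp Cq).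
    - exists q; auto using pairing_le_refl.
    - exists p; auto using pairing_le_refl. }
  set (P := fun x => exists p, C p /\ pdom p x).
  set (member := fun x y => epsilon (inhabits p0) (fun p => C p /\ pdom p x /\ pdom p y)).
  set (g := fun x y => ppair (member x y) x y).
  assert (member_spec : forall x y, P x -> P y ->
            C (member x y) /\ pdom (member x y) x /\ pdom (member x y) y).
  { intros x y [p [Cp px]] [q [Cq qy]]; apply epsilon_spec.
    destruct (join p q Cp Cq) as [r [Cr [[pr _] [qr _]]]]; exists r; auto. }
  (* all members of the chain agree on their common domain *)
  assert (g_eq : forall p x y, C p -> pdom p x -> pdom p y -> g x y = ppair p x y).
  { intros p x y Cp px py.
    destruct (member_spec x y) as [Cm [mx my]]; [exists p; auto | exists p; auto |].
    unfold g; destruct (Cchain p (member x y) Cp Cm) as [[_ h]|[_ h]]; auto.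
    symmetry; auto. }
  assert (common : forall x y, P x -> P y -> exists p, C p /\ pdom p x /\ pdom p y)
    by (intros x y px py; exists (member x y); auto).
  unshelve eexists {| pdom := P; ppair := g |}.
  - intro n; exists p0; split; [exact Cp0 | apply pdom_nat].
  - intros x y px py; destruct (common x y px py) as [p [Cp [hx hy]]].
    rewrite (g_eq p x y Cp hx hy); exists p; split; [exact Cp | apply pdom_pair; auto].
  - intros x y x' y' px py px' py' h.
    destruct (common x y px py) as [p [Cp [hx hy]]].
    destruct (common x' y' px' py') as [q [Cq [hx' hy']]].
    destruct (join p q Cp Cq) as [r [Cr [[pr _] [qr _]]]].
    rewrite (g_eq r x y Cr (pr _ hx) (pr _ hy)),
            (g_eq r x' y' Cr (qr _ hx') (qr _ hy')) in h.
    apply (ppair_inj r) in h; auto.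
  - intros p Cp; split; [intros x px; exists p; auto|].
    intros x y px py; simpl; apply g_eq; auto.
Qed.

Definition bit (b : bool) : K := e (if b then 1 else 0).

Lemma bit_inj b c : bit b = bit c -> b = c.
Proof. unfold bit; intro h; apply e_inj in h; destruct b, c; congruence. Qed.

(* A pairing on [P] extends to [P] plus a disjoint injective copy [psi P]:
   a pair not inside [P * P] is coded by [psi] of the [P]-pairing of its two
   membership bits with its two components pulled back into [P]. *)
Section Extension.

Variables (p : pairing) (psi : K -> K).
Hypothesis psi_out : forall x, pdom p x -> ~ pdom p (psi x).
Hypothesis psi_inj : injective_on (pdom p) psi.

Definition ext_dom x := pdom p x \/ exists z, pdom p z /\ x = psi z.

Definition inP x := boolp.asbool (pdom p x).

Definition pullback x :=
  if inP x then x else epsilon (inhabits (e 0)) (fun z => pdom p z /\ x = psi z).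

Lemma pullback_spec x :
  ext_dom x -> pdom p (pullback x) /\ x = if inP x then pullback x else psi (pullback x).
Proof.
  intro hx; unfold pullback, inP.
  destruct (boolp.asboolP (pdom p x)) as [px|npx]; [auto|].
  apply epsilon_spec; destruct hx; [contradiction | auto].
Qed.

Lemma pullback_inj x x' :
  ext_dom x -> ext_dom x' -> inP x = inP x' -> pullback x = pullback x' -> x = x'.
Proof.
  intros hx hx' ein eb.
  rewrite (proj2 (pullback_spec hx)), (proj2 (pullback_spec hx')), ein, eb; reflexivity.
Qed.

Definition inner x y :=
  ppair p (ppair p (bit (inP x)) (bit (inP y))) (ppair p (pullback x) (pullback y)).

Lemma inner_dom x y : ext_dom x -> ext_dom y -> pdom p (inner x y).
Proof.
  intros hx hy; unfold inner, bit.
  repeat apply pdom_pair; apply pdom_nat || apply pullback_spec; auto.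
Qed.

Lemma inner_inj x y x' y' : ext_dom x -> ext_dom y -> ext_dom x' -> ext_dom y' ->
  inner x y = inner x' y' -> x = x' /\ y = y'.
Proof.
  intros hx hy hx' hy' h.
  apply (ppair_inj p) in h as [hbits hbacks];
    [|unfold bit; repeat apply pdom_pair; apply pdom_nat || apply pullback_spec; auto ..].
  apply (ppair_inj p) in hbits as [bx by']; try (unfold bit; apply pdom_nat).
  apply (ppair_inj p) in hbacks as [bkx bky]; try apply pullback_spec; auto.
  apply bit_inj in bx; apply bit_inj in by'.
  split; apply pullback_inj; auto.
Qed.

Definition ext_pair x y :=
  if boolp.asbool (pdom p x /\ pdom p y) then ppair p x y else psi (inner x y).

Lemma ext_pair_dom x y : ext_dom x -> ext_dom y -> ext_dom (ext_pair x y).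
Proof.
  intros hx hy; unfold ext_pair.
  destruct (boolp.asboolP (pdom p x /\ pdom p y)) as [[px py]|_].
  - left; apply pdom_pair; auto.
  - right; exists (inner x y); split; [apply inner_dom; auto | reflexivity].
Qed.

Lemma ext_pair_inj x y x' y' : ext_dom x -> ext_dom y -> ext_dom x' -> ext_dom y' ->
  ext_pair x y = ext_pair x' y' -> x = x' /\ y = y'.
Proof.
  intros hx hy hx' hy'; unfold ext_pair.
  destruct (boolp.asboolP (pdom p x /\ pdom p y)) as [[px py]|nxy];
    destruct (boolp.asboolP (pdom p x' /\ pdom p y')) as [[px' py']|nxy']; intro h.
  - apply (ppair_inj p) in h; auto.
  - exfalso; apply (psi_out _ (inner_dom hx' hy')); rewrite <- h; apply pdom_pair; auto.
  - exfalso; apply (psi_out _ (inner_dom hx hy)); rewrite h; apply pdom_pair; auto.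
  - apply psi_inj, inner_inj in h; auto; apply inner_dom; auto.
Qed.

Lemma pairing_extend : exists q, pairing_le p q /\ ~ pairing_le q p.
Proof.
  exists {| pdom := ext_dom; ppair := ext_pair; pdom_nat := fun n => or_introl (pdom_nat p n);
            pdom_pair := ext_pair_dom; ppair_inj := ext_pair_inj |}.
  split.
  - split; [intros x px; left; exact px|].
    intros x y px py; simpl; unfold ext_pair.
    destruct (boolp.asboolP (pdom p x /\ pdom p y)); [reflexivity | tauto].
  - intros [sub _]; simpl in sub.
    apply (psi_out _ (pdom_nat p 0)), sub.
    right; exists (e 0); split; [apply pdom_nat | reflexivity].
Qed.

End Extension.

(* Either [K \ P] injects into [P], and then so does [K] (tagging the two
   parts with [e 0] and [e 1]), or [P] injects into [K \ P] and [p] is not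
   maximal. *)
Lemma maximal_pairing_embed (p : pairing) :
  (forall q, pairing_le p q -> pairing_le q p) ->
  exists phi : K -> K, (forall x, pdom p (phi x)) /\ forall x y, phi x = phi y -> x = y.
Proof.
  intro pmax.
  destruct (card_le_total {x | ~ pdom p x} {x | pdom p x}) as [hle|hle];
    apply (injects_of_card_le (e 0)) in hle as [j [jmaps jinj]].
  - exists (fun x => if boolp.asbool (pdom p x) then ppair p (e 0) x
                     else ppair p (e 1) (j x)).
    split.
    + intro x; destruct (boolp.asboolP (pdom p x)); apply pdom_pair; auto using pdom_nat.
    + intros x y.
      destruct (boolp.asboolP (pdom p x)) as [px|px];
        destruct (boolp.asboolP (pdom p y)) as [py|py]; intro h;
        apply (ppair_inj p) in h as [h0 h1]; auto using pdom_nat;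
        try (apply e_inj in h0; discriminate).
  - exfalso; destruct (pairing_extend p jmaps jinj) as [q [pq nqp]].
    exact (nqp (pmax q pq)).
Qed.

Lemma card_le_square : card_le (K * K) K.
Proof.
  destruct (zorn nat_pairing pairing_le) as [p pmax].
  - apply pairing_le_refl.
  - apply pairing_le_trans.
  - apply pairing_chain_bound.
  - destruct (maximal_pairing_embed pmax) as [phi [phiP phi_inj]].
    exists (fun ab => ppair p (phi (fst ab)) (phi (snd ab))).
    intros [a b] [c d] h; simpl in h.
    apply (ppair_inj p) in h as [h1 h2]; auto.
    apply phi_inj in h1; apply phi_inj in h2; subst; reflexivity.
Qed.

End Hessenberg.

Lemma card_le_square_infinite (K : Type) : infinite_card K -> card_le (K * K) K.
Proof. intros [e e_inj]; exact (card_le_square e e_inj). Qed.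

Lemma card_le_prod (X Y K : Type) :
  infinite_card K -> card_le X K -> card_le Y K -> card_le (X * Y) K.
Proof.
  intros Kinf [f finj] [g ginj].
  apply (card_le_trans (Y := K * K)); [|apply card_le_square_infinite, Kinf].
  exists (fun p => (f (fst p), g (snd p))).
  intros [a b] [c d] h; injection h; intros hb ha.
  apply finj in ha; apply ginj in hb; subst; reflexivity.
Qed.

Lemma card_le_bool_prod (K : Type) : infinite_card K -> card_le (bool * K) K.
Proof.
  intros Kinf; apply card_le_prod; [exact Kinf | | apply card_le_refl].
  destruct Kinf as [e e_inj]; exists (fun b : bool => e (if b then 1 else 0)).
  intros [] [] h; auto; apply e_inj in h; discriminate.
Qed.

Lemma card_le_option (K : Type) : infinite_card K -> card_le (option K) K.
Proof.
  intros Kinf; apply (card_le_trans (Y := bool * K)); [|apply card_le_bool_prod, Kinf].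
  destruct Kinf as [e _].
  exists (fun o => match o with Some x => (true, x) | None => (false, e 0) end).
  intros [x|] [y|] h; try discriminate; auto; injection h; intros ->; reflexivity.
Qed.

(* The length tag keeps the empty list apart from the codes of other lists. *)
Lemma card_le_list (X K : Type) : infinite_card K -> card_le X K -> card_le (list X) K.
Proof.
  intros Kinf [f f_inj]; destruct (card_le_square_infinite Kinf) as [pi pi_inj].
  destruct Kinf as [e e_inj].
  set (code := fix code (l : list X) :=
         match l with nil => e 0 | cons x l => pi (f x, code l) end).
  exists (fun l => pi (e (length l), code l)).
  intros l1 l2 h; apply pi_inj in h; injection h; intros hcode hlen; clear h.
  apply e_inj in hlen; revert l2 hlen hcode.
  induction l1 as [|a l1 IH]; intros [|b l2] hlen hcode; simpl in *;
    try discriminate; auto.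
  apply pi_inj in hcode; injection hcode; intros hl hab.
  apply f_inj in hab; subst; f_equal; auto.
Qed.

Lemma card_le_lt_trans (X Y K : Type) : card_le X Y -> card_lt Y K -> card_lt X K.
Proof.
  intros XY [YK nKY]; split.
  - exact (card_le_trans XY YK).
  - intro KX; exact (nKY (card_le_trans KX XY)).
Qed.

Lemma card_lt_option (X K : Type) :
  infinite_card K -> card_lt X K -> card_lt (option X) K.
Proof.
  intros Kinf [[f finj] nKX]; split.
  - apply (card_le_trans (Y := option K)); [|apply card_le_option, Kinf].
    exists (fun o => match o with None => None | Some x => Some (f x) end).
    intros [a|] [b|] h; try discriminate; auto.
    injection h; intro; f_equal; auto.
  - intro KX; destruct (classic (infinite_card X)) as [Xinf|Xfin].
    + exact (nKX (card_le_trans KX (card_le_option Xinf))).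
    + apply (@finite_not_infinite (option X)).
      * apply finite_option, not_infinite_finite, Xfin.
      * exact (card_le_trans Kinf KX).
Qed.

Lemma card_lt_square (X K : Type) :
  infinite_card K -> card_lt X K -> card_lt (X * X) K.
Proof.
  intros Kinf [XK nKX]; split.
  - apply card_le_prod; assumption.
  - intro KX; destruct (classic (infinite_card X)) as [Xinf|Xfin].
    + exact (nKX (card_le_trans KX (card_le_square_infinite Xinf))).
    + apply (@finite_not_infinite (X * X)).
      * apply finite_prod; apply not_infinite_finite, Xfin.
      * exact (card_le_trans Kinf KX).
Qed.

(** * Groups, cosets and double cosets *)

Unset Strict Implicit.

Declare Scope group_scope.
Delimit Scope group_scope with g.
Notation "x * y" := (gmul _ x y) : group_scope.
Notation "x ^-1" := (ginv _ x) (at level 3, left associativity, format "x ^-1")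
  : group_scope.
Notation "1" := (gone _) : group_scope.
Local Open Scope group_scope.

Section GroupFacts.

Variable G : Group.
Implicit Types x y z : G.

Lemma mulgI x y z : x * y = x * z -> y = z.
Proof.
  intro h; rewrite <- (gmul1g G y), <- (gmul1g G z), <- (gmulVg G x), <- !gmulA, h.
  reflexivity.
Qed.

Lemma mulKg x y : x^-1 * (x * y) = y.
Proof. rewrite gmulA, gmulVg, gmul1g; reflexivity. Qed.

Lemma mulKVg x y : x * (x^-1 * y) = y.
Proof. rewrite gmulA, gmulgV, gmul1g; reflexivity. Qed.

Lemma mulgK x y : y * x * x^-1 = y.
Proof. rewrite <- gmulA, gmulgV, gmulg1; reflexivity. Qed.

Lemma mulgKV x y : y * x^-1 * x = y.
Proof. rewrite <- gmulA, gmulVg, gmulg1; reflexivity. Qed.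

Lemma invgK x : x^-1^-1 = x.
Proof. apply mulgI with (x := x^-1); rewrite gmulgV, gmulVg; reflexivity. Qed.

Lemma invMg x y : (x * y)^-1 = y^-1 * x^-1.
Proof. apply mulgI with (x := x * y); rewrite gmulgV, gmulA, mulgK, gmulgV; reflexivity. Qed.

Lemma invg1 : (1 : G)^-1 = 1.
Proof. rewrite <- (gmul1g G (1^-1)); apply gmulgV. Qed.

End GroupFacts.

Record subgroup (G : Group) := {
  sg :> G -> Prop;
  sg1 : sg 1;
  sgM : forall x y, sg x -> sg y -> sg (x * y);
  sgV : forall x, sg x -> sg (x^-1)
}.
Arguments sg1 {G}.
Arguments sgM {G}.
Arguments sgV {G}.

Section Representatives.

Variables (X : Type) (R : X -> X -> Prop).
Hypothesis R_equiv : Equivalence R.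
Existing Instance R_equiv.

Definition rep (a : X) : X := epsilon (inhabits a) (R a).

Lemma rep_rel a : R a (rep a).
Proof. unfold rep; apply epsilon_spec; exists a; reflexivity. Qed.

Lemma rep_eq a b : R a b -> rep a = rep b.
Proof.
  intro ab; unfold rep.
  replace (R a) with (R b); [f_equal; apply proof_irrelevance|].
  apply functional_extensionality; intro z; apply propositional_extensionality.
  split; intro h; [transitivity b | transitivity a]; auto; symmetry; auto.
Qed.

Lemma rep_eq_rel a b : rep a = rep b -> R a b.
Proof.
  intro e; transitivity (rep a); [apply rep_rel|].
  rewrite e; symmetry; apply rep_rel.
Qed.

Lemma rep_idem a : rep (rep a) = rep a.
Proof. symmetry; apply rep_eq, rep_rel. Qed.

End Representatives.

Arguments rep {X} R a.
Arguments rep_rel {X R R_equiv} a.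
Arguments rep_eq {X R R_equiv} a b.
Arguments rep_eq_rel {X R R_equiv} a b.
Arguments rep_idem {X R R_equiv} a.

Section Cosets.

Variables (G : Group) (H : subgroup G).
Implicit Types a b x y : G.

Definition lcoset_rel a b := H (a^-1 * b).
Definition rcoset_rel a b := H (a * b^-1).
Definition dcoset_rel a b := exists h k, H h /\ H k /\ b = h * a * k.

#[global] Instance lcoset_equiv : Equivalence lcoset_rel.
Proof.
  split; unfold lcoset_rel.
  - intro a; rewrite gmulVg; apply sg1.
  - intros a b h; apply sgV in h; rewrite invMg, invgK in h; exact h.
  - intros a b c h1 h2; pose proof (sgM H _ _ h1 h2) as h.
    rewrite <- gmulA, mulKVg in h; exact h.
Qed.

#[global] Instance rcoset_equiv : Equivalence rcoset_rel.
Proof.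
  split; unfold rcoset_rel.
  - intro a; rewrite gmulgV; apply sg1.
  - intros a b h; apply sgV in h; rewrite invMg, invgK in h; exact h.
  - intros a b c h1 h2; pose proof (sgM H _ _ h1 h2) as h.
    rewrite <- gmulA, mulKg in h; exact h.
Qed.

#[global] Instance dcoset_equiv : Equivalence dcoset_rel.
Proof.
  split.
  - intro a; exists 1, 1; repeat split; try apply sg1.
    rewrite gmul1g, gmulg1; reflexivity.
  - intros a b [h [k [hh [hk ->]]]]; exists (h^-1), (k^-1).
    repeat split; try (apply sgV; assumption).
    rewrite <- !gmulA, gmulgV, gmulg1, mulKg; reflexivity.
  - intros a b c [h [k [hh [hk ->]]]] [h' [k' [hh' [hk' ->]]]].
    exists (h' * h), (k * k'); repeat split; try (apply sgM; assumption).
    rewrite !gmulA; reflexivity.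
Qed.

Definition lrep := rep lcoset_rel.
Definition rrep := rep rcoset_rel.
Definition drep := rep dcoset_rel.

Lemma lcoset_dcoset a b : lcoset_rel a b -> dcoset_rel a b.
Proof.
  intro h; exists 1, (a^-1 * b); repeat split; [apply sg1 | exact h |].
  rewrite gmul1g, mulKVg; reflexivity.
Qed.

Lemma rcoset_dcoset a b : rcoset_rel a b -> dcoset_rel a b.
Proof.
  intro h; symmetry; exists (a * b^-1), 1; repeat split; [exact h | apply sg1 |].
  rewrite gmulg1, mulgKV; reflexivity.
Qed.

Lemma dcoset_inv a b : dcoset_rel a b -> dcoset_rel (a^-1) (b^-1).
Proof.
  intros [h [k [hh [hk ->]]]]; exists (k^-1), (h^-1).
  repeat split; try (apply sgV; assumption).
  rewrite !invMg, gmulA; reflexivity.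
Qed.

Lemma lcoset_inv a b : lcoset_rel (a^-1) (b^-1) <-> rcoset_rel a b.
Proof. unfold lcoset_rel, rcoset_rel; rewrite invgK; reflexivity. Qed.

Lemma lcoset_mull c a b : lcoset_rel (c * a) (c * b) <-> lcoset_rel a b.
Proof. unfold lcoset_rel; rewrite invMg, <- gmulA, mulKg; reflexivity. Qed.

Lemma drep_lrep a : drep (lrep a) = drep a.
Proof. symmetry; apply rep_eq, lcoset_dcoset, rep_rel. Qed.

Lemma drep_inv a b : drep a = drep b -> drep (a^-1) = drep (b^-1).
Proof. intro h; apply rep_eq, dcoset_inv, rep_eq_rel, h. Qed.

Lemma rrep_of_lrep_inv a b : lrep (a^-1) = lrep (b^-1) -> rrep a = rrep b.
Proof. intro h; apply rep_eq, lcoset_inv, rep_eq_rel, h. Qed.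

Lemma rcoset_meets_lcoset r l :
  drep r = drep l -> exists x, rcoset_rel x r /\ lcoset_rel l x.
Proof.
  intro h; apply rep_eq_rel in h as [h [k [hh [hk ->]]]].
  exists (h * r); split; unfold rcoset_rel, lcoset_rel.
  - rewrite mulgK; exact hh.
  - rewrite !invMg, <- !gmulA, mulKg, gmulVg, gmulg1; apply sgV, hk.
Qed.

End Cosets.

Section Transversal.

Variables (G : Group) (H : subgroup G).
Implicit Types b d r x z : G.

Definition lrep_in d z := lrep H z = z /\ drep H z = d.
Definition rrep_in d z := rrep H z = z /\ drep H z = d.

Definition rcosets_le_lcosets d := exists f, injects (rrep_in d) (lrep_in d) f.

Definition match_rl d : G -> G :=
  epsilon (inhabits (fun x => x)) (injects (rrep_in d) (lrep_in d)).

Lemma match_rl_spec d :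
  rcosets_le_lcosets d -> injects (rrep_in d) (lrep_in d) (match_rl d).
Proof. unfold match_rl; apply epsilon_spec. Qed.

Definition meet r x := epsilon (inhabits r) (fun y => rcoset_rel H y r /\ lcoset_rel H x y).

Lemma meet_spec r x :
  drep H r = drep H x -> rcoset_rel H (meet r x) r /\ lcoset_rel H x (meet r x).
Proof. intro h; unfold meet; apply epsilon_spec, rcoset_meets_lcoset, h. Qed.

(* In each double coset with no more right than left cosets, one point of
   every right coset, these points lying in pairwise distinct left cosets. *)
Definition transversal b :=
  exists r, rrep H r = r /\ rcosets_le_lcosets (drep H r) /\
            b = meet r (match_rl (drep H r) r).

Lemma transversal_lcoset_unique b1 b2 :
  transversal b1 -> transversal b2 -> lcoset_rel H b1 b2 -> b1 = b2.
Proof.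
  intros [r1 [r1rep [good1 ->]]] [r2 [r2rep [good2 ->]]] b12.
  destruct (match_rl_spec good1) as [maps1 inj1].
  destruct (match_rl_spec good2) as [maps2 _].
  destruct (maps1 r1 (conj r1rep eq_refl)) as [l1rep d1].
  destruct (maps2 r2 (conj r2rep eq_refl)) as [l2rep d2].
  destruct (meet_spec (eq_sym d1)) as [_ m1].
  destruct (meet_spec (eq_sym d2)) as [_ m2].
  assert (el : match_rl (drep H r1) r1 = match_rl (drep H r2) r2).
  { rewrite <- l1rep, <- l2rep; apply rep_eq.
    transitivity (meet r1 (match_rl (drep H r1) r1)); [exact m1|].
    transitivity (meet r2 (match_rl (drep H r2) r2)); [exact b12|].
    symmetry; exact m2. }
  assert (ed : drep H r1 = drep H r2) by (rewrite <- d1, <- d2, el; reflexivity).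
  assert (er : r1 = r2).
  { apply inj1; [split; auto | split; auto | rewrite el, ed; reflexivity]. }
  subst; reflexivity.
Qed.

Lemma transversal_meets_rcoset x :
  rcosets_le_lcosets (drep H x) -> exists b, transversal b /\ rcoset_rel H x b.
Proof.
  intro good; set (r := rrep H x).
  assert (dr : drep H r = drep H x) by (symmetry; apply rep_eq, rcoset_dcoset, rep_rel).
  rewrite <- dr in good.
  destruct (match_rl_spec good) as [maps _].
  assert (rr : rrep H r = r) by apply rep_idem.
  destruct (maps r (conj rr eq_refl)) as [_ dl].
  destruct (meet_spec (eq_sym dl)) as [m _].
  exists (meet r (match_rl (drep H r) r)); split; [exists r; auto|].
  transitivity r; [apply rep_rel | symmetry; exact m].
Qed.

(* Inversion swaps left and right cosets and maps the double coset of [z]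
   onto that of [z^-1]. *)
Lemma rcosets_le_lcosets_inv d z :
  drep H z = d -> (exists f, injects (lrep_in d) (rrep_in d) f) ->
  rcosets_le_lcosets (drep H (z^-1)).
Proof.
  intros <- [f [fmaps finj]].
  exists (fun r => lrep H ((f (lrep H (r^-1)))^-1)).
  assert (to_l : forall r, rrep_in (drep H (z^-1)) r -> lrep_in (drep H z) (lrep H (r^-1))).
  { intros r [_ dr]; split; [apply rep_idem|].
    rewrite drep_lrep; apply drep_inv in dr; rewrite !invgK in dr; exact dr. }
  split.
  - intros r hr; destruct (fmaps _ (to_l r hr)) as [_ d2].
    split; [apply rep_idem|].
    rewrite drep_lrep; apply drep_inv; exact d2.
  - intros r1 r2 h1 h2 h.
    apply rrep_of_lrep_inv in h.
    rewrite (proj1 (fmaps _ (to_l r1 h1))), (proj1 (fmaps _ (to_l r2 h2))) in h.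
    apply finj, rrep_of_lrep_inv in h; try apply to_l; auto.
    rewrite (proj1 h1), (proj1 h2) in h; exact h.
Qed.

Definition good_lrep z := lrep H z = z /\ rcosets_le_lcosets (drep H z).

(* A double coset has no more right than left cosets, or its inverse has. *)
Lemma card_lreps_le (K : Type) :
  infinite_card K -> card_le {z | good_lrep z} K -> card_le {z | lrep H z = z} K.
Proof.
  intros Kinf hgood; pose proof Kinf as [e _].
  destruct (injective_on_of_card_le (e 0) _ hgood) as [j jinj].
  set (match_lr d := epsilon (inhabits (fun x : G => x)) (injects (lrep_in d) (rrep_in d))).
  assert (match_lr_spec : forall z, ~ rcosets_le_lcosets (drep H z) ->
            injects (lrep_in (drep H z)) (rrep_in (drep H z)) (match_lr (drep H z))).
  { intros z bad; apply epsilon_spec.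
    destruct (injects_total 1 (rrep_in (drep H z)) (lrep_in (drep H z))); tauto. }
  set (partner z := lrep H ((match_lr (drep H z) z)^-1)).
  assert (partner_good : forall z, lrep H z = z -> ~ rcosets_le_lcosets (drep H z) ->
                           good_lrep (partner z)).
  { intros z zrep bad; split; [apply rep_idem|].
    destruct (match_lr_spec z bad) as [fmaps finj].
    unfold partner; rewrite drep_lrep.
    apply rcosets_le_lcosets_inv with (d := drep H z); [apply (fmaps z); split; auto | eauto]. }
  apply (card_le_trans (Y := bool * K)); [|apply card_le_bool_prod, Kinf].
  apply (card_le_of_injective_on (f := fun z =>
    if boolp.asbool (rcosets_le_lcosets (drep H z)) then (true, j z)
    else (false, j (partner z)))).
  intros x y xrep yrep.
  destruct (boolp.asboolP (rcosets_le_lcosets (drep H x))) as [gx|bx];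
    destruct (boolp.asboolP (rcosets_le_lcosets (drep H y))) as [gy|by'];
    intro h; injection h; clear h; intro h; try discriminate.
  - apply jinj; [split | split | ]; auto.
  - apply jinj, rrep_of_lrep_inv in h; try apply partner_good; auto.
    destruct (match_lr_spec x bx) as [mx ix]; destruct (match_lr_spec y by') as [my _].
    destruct (mx x (conj xrep eq_refl)) as [rx dx].
    destruct (my y (conj yrep eq_refl)) as [ry dy].
    rewrite rx, ry in h.
    assert (ed : drep H x = drep H y) by (rewrite <- dx, <- dy, h; reflexivity).
    apply ix; [split; auto | split; auto | rewrite h, ed; reflexivity].
Qed.

Lemma card_le_lreps_subgroup (K : Type) :
  infinite_card K -> card_le {z | lrep H z = z} K -> card_le {x | H x} K -> card_le G K.
Proof.
  intros Kinf lreps_le H_le.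
  apply (card_le_trans (Y := {z | lrep H z = z} * {x | H x})); [|apply card_le_prod; auto].
  assert (hs : forall x, H ((lrep H x)^-1 * x)).
  { intro x; change (lcoset_rel H (lrep H x) x); symmetry; apply rep_rel. }
  exists (fun x => (exist (fun z => lrep H z = z) (lrep H x) (rep_idem x),
                    exist H ((lrep H x)^-1 * x) (hs x))).
  intros x y h; injection h; intros h2 h1.
  rewrite h1 in h2; exact (mulgI h2).
Qed.

End Transversal.

(** * The ballean *)

Section Ballean.

Variables (G : Group) (K : Type).
Hypothesis K_inf : infinite_card K.

Definition oval {I : G -> Prop} (o : option {i | I i}) : G :=
  match o with None => 1 | Some i => proj1_sig i end.

Lemma ballS_ent_I (I A : G -> Prop) y :
  ballS (ent_I G I) A y -> exists (o : option {i | I i}) a, A a /\ y = oval o * a.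
Proof.
  intros [a [Aa [->|[i [Ii ->]]]]].
  - exists None, a; split; [exact Aa | symmetry; apply gmul1g].
  - exists (Some (exist _ i Ii)), a; auto.
Qed.

Lemma bounded_small (Z : G -> Prop) :
  bounded (ent_lt_kappa G K) Z -> card_lt {y | Z y} K.
Proof.
  intros [E [[I [Ismall ->]] [x Zball]]].
  apply (card_le_lt_trans (Y := option {i | I i})); [|apply card_lt_option; auto].
  set (index y := epsilon (inhabits None) (fun o : option {i | I i} => y = oval o * x)).
  assert (index_spec : forall y, Z y -> y = oval (index y) * x).
  { intros y Zy; unfold index; apply epsilon_spec.
    assert (hy : ballS (ent_I G I) (fun a => a = x) y)
      by (exists x; split; [reflexivity | apply Zball, Zy]).
    destruct (ballS_ent_I hy) as [o [a [-> e]]]; exists o; exact e. }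
  apply (card_le_of_injective_on (f := index)).
  intros y1 y2 Zy1 Zy2 e.
  rewrite (index_spec y1 Zy1), (index_spec y2 Zy2), e; reflexivity.
Qed.

Lemma small_bounded (Z : G -> Prop) :
  card_lt {y | Z y} K -> bounded (ent_lt_kappa G K) Z.
Proof.
  intro Zsmall; exists (ent_I G Z); split; [exists Z; auto|].
  exists 1; intros y Zy; right; exists y; split; [exact Zy | symmetry; apply gmulg1].
Qed.

Lemma singleton_small (g : G) : card_lt {x : G | x = g} K.
Proof.
  pose proof K_inf as [e e_inj]; split.
  - exists (fun _ => e 0); intros [x ->] [y ->] _; reflexivity.
  - intros [f finj].
    assert (h : f (e 0) = f (e 1%nat)).
    { destruct (f (e 0)) as [x ->], (f (e 1%nat)) as [y ->]; reflexivity. }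
    apply finj, e_inj in h; discriminate.
Qed.

Lemma asymp_nbhd_small (U A : G -> Prop) (g : G) :
  asymp_nbhd (ent_lt_kappa G K) U A ->
  card_lt {y | ballS (ent_I G (fun x => x = g)) A y /\ ~ U y} K.
Proof.
  intro nbhd; apply bounded_small, nbhd.
  exists (fun x => x = g); split; [apply singleton_small | reflexivity].
Qed.

Variable H : subgroup G.
Hypothesis H_le : card_le {x | H x} K.
Hypothesis K_le : card_le K {x | H x}.

(* A point [y] of [I H \cap I B] is determined by [g, k] in [I + 1] with
   [y \in g H] and [y \in k B], since [B] meets each left coset at most once. *)
Lemma asymp_disjoint_transversal :
  asymp_disjoint (ent_lt_kappa G K) H (transversal H).
Proof.
  intros E [I [Ismall ->]]; apply small_bounded.
  set (O := option {i | I i}).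
  apply (card_le_lt_trans (Y := O * O)); [|apply card_lt_square, card_lt_option; auto].
  set (in_H y (o : O) := lcoset_rel H (oval o) y).
  set (in_B y (o : O) := exists b, transversal H b /\ y = oval o * b).
  apply (card_le_of_injective_on (f := fun y =>
    (epsilon (inhabits None) (in_H y), epsilon (inhabits None) (in_B y)))).
  assert (in_H_spec : forall y, ballS (ent_I G I) H y ->
                        in_H y (epsilon (inhabits None) (in_H y))).
  { intros y hy; apply epsilon_spec.
    destruct (ballS_ent_I hy) as [o [a [Ha ->]]].
    exists o; unfold in_H, lcoset_rel; rewrite mulKg; exact Ha. }
  assert (in_B_spec : forall y, ballS (ent_I G I) (transversal H) y ->
                        in_B y (epsilon (inhabits None) (in_B y))).
  { intros y hy; apply epsilon_spec.
    destruct (ballS_ent_I hy) as [o [b [Bb ->]]]; exists o, b; auto. }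
  intros y1 y2 [H1 B1] [H2 B2] h; injection h; intros hB hH; clear h.
  assert (y12 : lcoset_rel H y1 y2).
  { set (o := epsilon (inhabits None) (in_H y2)).
    assert (h1 : lcoset_rel H (oval o) y1) by (unfold o; rewrite <- hH; apply in_H_spec, H1).
    assert (h2 : lcoset_rel H (oval o) y2) by apply in_H_spec, H2.
    symmetry in h1; etransitivity; eassumption. }
  destruct (in_B_spec y1 B1) as [b1 [Bb1 e1]].
  destruct (in_B_spec y2 B2) as [b2 [Bb2 e2]].
  rewrite hB in e1.
  set (k := oval (epsilon (inhabits None) (in_B y2))) in e1, e2.
  rewrite e1, e2 in y12 |- *; apply lcoset_mull in y12.
  rewrite (transversal_lcoset_unique Bb1 Bb2 y12); reflexivity.
Qed.

Lemma lcoset_meets_nbhd (U : G -> Prop) :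
  asymp_nbhd (ent_lt_kappa G K) U H -> forall g, exists y, lcoset_rel H g y /\ U y.
Proof.
  intros nbhd g; apply NNPP; intro miss.
  destruct (asymp_nbhd_small g nbhd) as [_ nle]; apply nle.
  destruct K_le as [f finj].
  set (Y y := ballS (ent_I G (fun x => x = g)) H y /\ ~ U y).
  assert (inY : forall k, Y (g * proj1_sig (f k))).
  { intro k; split.
    - exists (proj1_sig (f k)); split; [apply proj2_sig | right; exists g; auto].
    - intro Uy; apply miss; exists (g * proj1_sig (f k)); split; [|exact Uy].
      unfold lcoset_rel; rewrite mulKg; apply proj2_sig. }
  exists (fun k => exist Y (g * proj1_sig (f k)) (inY k)).
  intros k1 k2 h; apply (f_equal (@proj1_sig _ _)), mulgI, sig_eq, finj in h; exact h.
Qed.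

(* [z H] is determined by [h z] in [H] and by [u z] in the small set
   [h z B \ V]. *)
Lemma card_good_lreps_le (U V : G -> Prop) :
  asymp_nbhd (ent_lt_kappa G K) U H ->
  asymp_nbhd (ent_lt_kappa G K) V (transversal H) ->
  (forall x, ~ (U x /\ V x)) -> card_le {z | good_lrep H z} K.
Proof.
  intros Unbhd Vnbhd disj; pose proof K_inf as [e _].
  set (u z := epsilon (inhabits z) (fun y => lcoset_rel H z y /\ U y)).
  assert (u_spec : forall z, lcoset_rel H z (u z) /\ U (u z))
    by (intro z; apply epsilon_spec, lcoset_meets_nbhd, Unbhd).
  set (b z := epsilon (inhabits z) (fun b => transversal H b /\ rcoset_rel H (u z) b)).
  assert (b_spec : forall z, good_lrep H z -> transversal H (b z) /\ rcoset_rel H (u z) (b z)).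
  { intros z [_ good]; apply epsilon_spec, transversal_meets_rcoset.
    replace (drep H (u z)) with (drep H z); [exact good|].
    apply rep_eq, lcoset_dcoset, u_spec. }
  set (h z := u z * (b z)^-1).
  set (Y c y := ballS (ent_I G (fun x => x = c)) (transversal H) y /\ ~ V y).
  assert (u_in_Y : forall z, good_lrep H z -> Y (h z) (u z)).
  { intros z gz; destruct (b_spec z gz) as [Bb _]; split.
    - exists (b z); split; [exact Bb | right; exists (h z); split; [reflexivity|]].
      unfold h; rewrite mulgKV; reflexivity.
    - intro Vu; exact (disj (u z) (conj (proj2 (u_spec z)) Vu)). }
  set (jY c := epsilon (inhabits (fun _ : G => e 0)) (injective_on (Y c))).
  assert (jY_inj : forall c, injective_on (Y c) (jY c)).
  { intro c; apply epsilon_spec, (injective_on_of_card_le (e 0)).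
    apply (asymp_nbhd_small c Vnbhd). }
  destruct (injective_on_of_card_le (e 0) _ H_le) as [jH jH_inj].
  apply (card_le_trans (Y := K * K)); [|apply card_le_square_infinite, K_inf].
  apply (card_le_of_injective_on (f := fun z => (jH (h z), jY (h z) (u z)))).
  intros z1 z2 g1 g2 eq; injection eq; intros eu eh; clear eq.
  apply jH_inj in eh; try (apply b_spec; assumption).
  rewrite eh in eu; apply jY_inj in eu; [|rewrite <- eh; auto | auto].
  rewrite <- (proj1 g1), <- (proj1 g2); apply rep_eq.
  transitivity (u z1); [apply u_spec | rewrite eu; symmetry; apply u_spec].
Qed.

End Ballean.

Section Generated.

Variables (G : Group) (X : Type) (f : X -> G).

Fixpoint word_eval (w : list (bool * X)) : G :=
  match w with
  | nil => 1
  | cons (s, x) w => (if s then f x else (f x)^-1) * word_eval w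
  end.

Lemma word_eval_app w1 w2 : word_eval (w1 ++ w2) = word_eval w1 * word_eval w2.
Proof.
  induction w1 as [|[s x] w1 IH]; simpl; [rewrite gmul1g | rewrite IH, gmulA]; reflexivity.
Qed.

Definition word_inv (w : list (bool * X)) := rev (map (fun p => (negb (fst p), snd p)) w).

Lemma word_eval_inv w : word_eval (word_inv w) = (word_eval w)^-1.
Proof.
  unfold word_inv; induction w as [|[s x] w IH]; simpl; [rewrite invg1; reflexivity|].
  rewrite word_eval_app, IH, invMg; simpl; rewrite gmulg1.
  destruct s; simpl; [reflexivity | rewrite invgK; reflexivity].
Qed.

Definition generated : subgroup G.
Proof.
  refine {| sg := fun x => exists w, x = word_eval w |}.
  - exists nil; reflexivity.
  - intros x y [w1 ->] [w2 ->]; exists (w1 ++ w2); symmetry; apply word_eval_app.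
  - intros x [w ->]; exists (word_inv w); symmetry; apply word_eval_inv.
Defined.

Lemma generated_gen x : generated (f x).
Proof. exists (cons (true, x) nil); simpl; rewrite gmulg1; reflexivity. Qed.

Lemma card_le_generated : card_le {x | generated x} (list (bool * X)).
Proof.
  set (word x := epsilon (inhabits nil) (fun w => x = word_eval w)).
  exists (fun x => word (proj1_sig x)).
  intros [x gx] [y gy] h; apply sig_eq; simpl in *.
  rewrite (epsilon_spec (inhabits nil) _ gx), (epsilon_spec (inhabits nil) _ gy).
  exact (f_equal word_eval h).
Qed.

End Generated.

Theorem theorem1p17 (G : Group) (K : Type) :
  infinite_card K -> card_lt K (carrier G) ->
  ~ normal_ballean (ent_lt_kappa G K).
Proof.
  intros K_inf [[f f_inj] nGK] normal.
  set (H := generated f).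
  assert (H_le : card_le {x | H x} K).
  { apply (card_le_trans (card_le_generated f)), card_le_list; [exact K_inf|].
    apply card_le_bool_prod, K_inf. }
  assert (K_le : card_le K {x | H x}).
  { exists (fun k => exist H (f k) (generated_gen f k)).
    intros k1 k2 h; apply f_inj; exact (f_equal (@proj1_sig _ _) h). }
  destruct (normal H (transversal H) (asymp_disjoint_transversal K_inf H))
    as [U [V [Unbhd [Vnbhd disj]]]].
  apply nGK, (card_le_lreps_subgroup (H := H) K_inf); [|exact H_le].
  apply (card_lreps_le K_inf), (card_good_lreps_le K_inf H_le K_le Unbhd Vnbhd disj).
Qed.
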